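(* Let $n=\prod_{j=1}^k p_j^{a_j}$ be the factorization of $n$ into powers of distinct primes, let $\omega\in(\mathbb{Z}/n\mathbb{Z})^\times$ and $r\in\mathbb{Z}/n\mathbb{Z}$, and let $X=\langle\omega\rangle r$. For each $j$, let $\psi_j:\mathbb{Z}/n\mathbb{Z}\to\mathbb{Z}/p_j^{a_j}\mathbb{Z}$ be the natural reduction homomorphism, let $x_j\in\mathbb{Z}/p_j^{a_j}\mathbb{Z}$ be the multiplicative inverse of $n/p_j^{a_j}$ modulo $p_j^{a_j}$, and let $X_j=\langle\psi_j(\omega)\rangle\, x_j\psi_j(r)\subseteq\mathbb{Z}/p_j^{a_j}\mathbb{Z}$. If the orbit sizes $|X_1|,\dots,|X_k|$ are pairwise coprime, then for every $y\in\mathbb{Z}/n\mathbb{Z}$, $$\sigma_X(y)=\prod_{j=1}^k \sigma_{X_j}(\psi_j(y)),$$ where $\sigma_{X_j}$ is the supercharacter of $\mathbb{Z}/p_j^{a_j}\mathbb{Z}$ attached to $X_j$.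
   Context: Write $e(\theta)=\exp(2\pi i\theta)$. For a positive integer $m$, a subgroup $A$ of $(\mathbb{Z}/m\mathbb{Z})^\times$ and $r\in\mathbb{Z}/m\mathbb{Z}$, let $X=Ar=\{ar:a\in A\}$ and define $\sigma_X:\mathbb{Z}/m\mathbb{Z}\to\mathbb{C}$ by $\sigma_X(y)=\sum_{x\in X}e\left(\frac{xy}{m}\right)$. Here $\langle\omega\rangle$ denotes the cyclic subgroup generated by $\omega$. *)

From HB Require Import structures.
From mathcomp Require Import all_boot all_order all_algebra all_fingroup all_field.
Set Implicit Arguments. Unset Strict Implicit. Unset Printing Implicit Defensive.
Import GRing.Theory Num.Theory.
Local Open Scope ring_scope.

(* zeta m = exp(2 pi i / m) in algC: m.-root (-1) is the m-th root of -1 of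
   minimal nonnegative argument, i.e. exp(i pi / m); its square is exp(2 pi i/m). *)
Definition zeta (m : nat) : algC := (m.-root (-1)) ^+ 2.

Definition e_frac (m k : nat) : algC := zeta m ^+ k.

(* The cyclic subgroup <w> of the unit group of Z/mZ, for w a unit
   (empty if w is not a unit, a case never used). *)
Definition unit_cycle (m : nat) (w : 'Z_m) : {set {unit 'Z_m}} :=
  if (insub w : option {unit 'Z_m}) is Some u then <[u]>%g else set0.

Definition orbitX (m : nat) (w r : 'Z_m) : {set 'Z_m} :=
  [set (val a * r)%R | a in unit_cycle w].

Definition sigma (m : nat) (X : {set 'Z_m}) (y : 'Z_m) : algC :=
  \sum_(x in X) e_frac m ((x : nat) * (y : nat))%N.

Definition psi (n q : nat) (x : 'Z_n) : 'Z_q := ((x : nat)%:R : 'Z_q).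

(* For the prime p | n with q = p^a = n`_p:
   X_p = <psi(w)> x_p psi(r), x_p = (n/q)^{-1} mod q. *)
Definition Xj (n : nat) (w r : 'Z_n) (p : nat) : {set 'Z_(n`_p)} :=
  orbitX (psi (n`_p) w) ((((n %/ n`_p)%N)%:R : 'Z_(n`_p))^-1 * psi (n`_p) r).

From HB Require Import structures.
From mathcomp Require Import all_boot all_order all_algebra all_fingroup all_field.
From mathcomp Require Import lra zify.
Import Order.TTheory GRing.Theory Num.Theory.
Local Open Scope ring_scope.

(* Write n = prod_p n_p (n_p = n`_p), psi_p : Z/n -> Z/n_p for the reduction
   and c_p = (n/n_p)^{-1} mod n_p.  The proof rests on three facts.
   (1) e(x y / n) = prod_p e(c_p psi_p(x) psi_p(y) / n_p), because
       x = sum_p (n/n_p) c_p psi_p(x) mod n; this needs zeta n^(n/n_p) = zeta n_p,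
       i.e. (e^{i pi/(dq)})^d = e^{i pi/q} for the principal root m.-root (-1)
       of the library.  Since algC carries no angles, this is proved
       geometrically: rt m = m.-root (-1) is the upper point of order dividing
       2m, other than 1, with the largest real part, it is a primitive 2m-th
       root, and the real parts of its powers decrease from rt m ^+ 0 to
       rt m ^+ m.
   (2) The orbit X = <w> r is traversed by k |-> w^k r with exact period |X|, and
       c_p psi_p(w^k r) = psi_p(w)^k (c_p psi_p(r)) traverses X_p with period
       |X_p|; injectivity of the CRT coordinates gives |X| = prod_p |X_p| when
       the |X_p| are pairwise coprime.
   (3) For pairwise coprime periods L_p, the CRT identifies k mod prod_p L_p
       with (k mod L_p)_p, so a sum over k of a product of L_p-periodic terms
       is the product of the sums over one period.
   Summing (1) over k < |X| with (2) and applying (3) gives the theorem. *)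

(* Plane geometry on the upper unit half-circle over a real field: a point
   (x, y) with x^2 + y^2 = 1 and y >= 0 is (cos a, sin a) with 0 <= a <= pi. *)
Section UpperHalfCircle.
Context {R : realFieldType}.

(* If a + b <= pi (i.e. cos a + cos b >= 0), then sin (a + b) >= 0. *)
Lemma arc_sum_upper {x1 y1 x2 y2 : R} :
  x1 * x1 + y1 * y1 = 1 -> x2 * x2 + y2 * y2 = 1 -> 0 <= y1 -> 0 <= y2 ->
  0 <= x1 + x2 -> 0 <= x1 * y2 + x2 * y1.
Proof.
move=> h1 h2 hy1 hy2 hs.
have [hx1|hx1] := lerP 0 x1; have [hx2|hx2] := lerP 0 x2.
- by apply: addr_ge0; apply: mulr_ge0.
- have hy : y1 <= y2 by nra.
  have p1 : 0 <= (x1 + x2) * y2 by apply: mulr_ge0.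
  have p2 : 0 <= (- x2) * (y2 - y1) by apply: mulr_ge0; lra.
  lra.
- have hy : y2 <= y1 by nra.
  have p1 : 0 <= (x1 + x2) * y1 by apply: mulr_ge0.
  have p2 : 0 <= (- x1) * (y1 - y2) by apply: mulr_ge0; lra.
  lra.
- lra.
Qed.

(* ... and then cos (a + b) <= cos a. *)
Lemma arc_sum_Re_le {x1 y1 x2 y2 : R} :
  x1 * x1 + y1 * y1 = 1 -> x2 * x2 + y2 * y2 = 1 -> 0 <= y1 -> 0 <= y2 ->
  0 <= x1 + x2 -> x1 * x2 - y1 * y2 <= x1.
Proof.
move=> h1 h2 hy1 hy2 hs.
have hx2 : x2 <= 1 by nra.
have [hx1|hx1] := lerP 0 x1.
- have p1 : x1 * x2 <= x1 * 1 by apply: ler_wpM2l.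
  have p2 : 0 <= y1 * y2 by apply: mulr_ge0.
  lra.
- have hy : y2 <= y1 by nra.
  have p1 : y2 * y2 <= y1 * y2 by apply: ler_wpM2r.
  have p2 : 0 <= (1 - x2) * (1 + x2 + x1) by apply: mulr_ge0; lra.
  nra.
Qed.

(* If a <= b (i.e. cos b <= cos a), then sin (b - a) >= 0. *)
Lemma arc_diff_upper {x1 y1 x2 y2 : R} :
  x1 * x1 + y1 * y1 = 1 -> x2 * x2 + y2 * y2 = 1 -> 0 <= y1 -> 0 <= y2 ->
  x2 <= x1 -> 0 <= y2 * x1 - x2 * y1.
Proof.
move=> h1 h2 hy1 hy2 hs.
have [hx1|hx1] := lerP 0 x1.
- have [hx2|hx2] := lerP x2 0.
  + have p1 : 0 <= y2 * x1 by apply: mulr_ge0.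
    have p2 : 0 <= (- x2) * y1 by apply: mulr_ge0; lra.
    lra.
  + have hy : y1 <= y2 by nra.
    have p1 : 0 <= (y2 - y1) * x1 by apply: mulr_ge0; lra.
    have p2 : 0 <= y1 * (x1 - x2) by apply: mulr_ge0; lra.
    lra.
- have hy : y2 <= y1 by nra.
  have p1 : 0 <= (y1 - y2) * (- x1) by apply: mulr_ge0; lra.
  have p2 : 0 <= y1 * (x1 - x2) by apply: mulr_ge0; lra.
  lra.
Qed.

(* If 0 < c < a, then cos a < cos (a - c). *)
Lemma arc_diff_Re_gt {x1 y1 x2 y2 : R} :
  x1 * x1 + y1 * y1 = 1 -> x2 * x2 + y2 * y2 = 1 -> 0 <= y1 -> 0 <= y2 ->
  x1 < x2 -> x2 < 1 -> x1 < x1 * x2 + y1 * y2.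
Proof.
move=> h1 h2 hy1 hy2 hlt hlt1.
have [hx|hx] := lerP x1 0.
- have [hx0|hx0] := ltrP x1 0.
  + have p1 : 0 < (- x1) * (1 - x2) by apply: mulr_gt0; lra.
    have p2 : 0 <= y1 * y2 by apply: mulr_ge0.
    lra.
  + have e0 : x1 = 0 by lra.
    have e1 : y1 = 1 by nra.
    have p : 0 < y2 by nra.
    rewrite e0 e1; lra.
- have hy : y2 <= y1 by nra.
  have p1 : y2 * y2 <= y1 * y2 by apply: ler_wpM2r.
  have p2 : 0 < (1 - x2) * (1 + x2 - x1) by apply: mulr_gt0; lra.
  nra.
Qed.

End UpperHalfCircle.

Definition upper (z : algC) := (`|z| == 1) && (0 <= 'Im z).

(* Real and imaginary parts as elements of the real closed field algR,
   to transport the lemmas above. *)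
Definition reR (z : algC) : algR := in_algR (Creal_Re z).
Definition imR (z : algC) : algR := in_algR (Creal_Im z).

Lemma upperR {z : algC} : upper z -> reR z * reR z + imR z * imR z = 1 /\ 0 <= imR z.
Proof.
case/andP=> /eqP nz iz; split => //; apply: val_inj => /=.
by have := normC2_Re_Im z; rewrite nz expr1n !expr2.
Qed.

Lemma upperM u v : upper u -> upper v -> 0 <= 'Re u + 'Re v -> upper (u * v).
Proof.
move=> hu hv s; have [cu iu] := upperR hu; have [cv iv] := upperR hv.
case/andP: hu => /eqP nu _; case/andP: hv => /eqP nv _.
rewrite /upper normrM nu nv mulr1 eqxx ImM.
exact (arc_sum_upper cu cv iu iv s).
Qed.

Lemma Re_upperM_le u v : upper u -> upper v -> 0 <= 'Re u + 'Re v ->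
  'Re (u * v) <= 'Re u.
Proof.
move=> hu hv s; have [cu iu] := upperR hu; have [cv iv] := upperR hv.
rewrite ReM; exact: (arc_sum_Re_le cu cv iu iv s).
Qed.

Lemma upper_mul_conj u w : upper u -> upper w -> 'Re w <= 'Re u -> upper (w * u^*).
Proof.
move=> hu hw s; have [cu iu] := upperR hu; have [cw iw] := upperR hw.
case/andP: hu => /eqP nu _; case/andP: hw => /eqP nw _.
rewrite /upper normrM norm_conjC nu nw mulr1 eqxx ImM Re_conj Im_conj.
rewrite mulrN addrC /= [_ * 'Im w]mulrC.
exact (arc_diff_upper cu cw iu iw s).
Qed.

Lemma Re_mul_conj_gt x z : upper x -> upper z -> 'Re x < 'Re z -> 'Re z < 1 ->
  'Re x < 'Re (x * z^*).
Proof.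
move=> hx hz s1 s2; have [cx ix] := upperR hx; have [cz iz] := upperR hz.
rewrite ReM Re_conj Im_conj mulrN opprK.
exact (arc_diff_Re_gt cx cz ix iz s1 s2).
Qed.

Lemma upper_Re_inj u v : upper u -> upper v -> 'Re u = 'Re v -> u = v.
Proof.
case/andP=> /eqP nu iu /andP[/eqP nv iv] e.
by apply: eqC_semipolar; rewrite ?nu ?nv ?mulr_ge0.
Qed.

Lemma unity_norm (z : algC) N : (0 < N)%N -> z ^+ N = 1 -> `|z| = 1.
Proof.
move=> hN h; apply/eqP.
by rewrite -(pexpr_eq1 hN) ?normr_ge0 // -normrX h normr1.
Qed.
Arguments unity_norm {z N}.

Lemma upper1 : upper 1.
Proof. by rewrite /upper normr1 eqxx (elimT (Creal_ImP 1) (rpred1 _)) lexx. Qed.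

Lemma upperN1 : upper (-1).
Proof. by rewrite /upper normrN1 eqxx (elimT (Creal_ImP (-1)) (rpredN1 _)) lexx. Qed.

Lemma N1_neq1 : (-1 : algC) != 1.
Proof. by rewrite eq_sym -subr_eq0 opprK (_ : 1 + 1 = 2%:R) // pnatr_eq0. Qed.

Lemma unit_inv_conj (u : algC) : `|u| = 1 -> u^-1 = u^*.
Proof. by move=> h; rewrite invC_norm h expr1n invr1 mul1r. Qed.

(* Among the upper points of order dividing 2m other than 1, some z has the
   largest real part; it is the candidate for e^{i pi/m}. *)
Lemma max_upper_root {m : nat} : (0 < m)%N -> exists z : algC,
  [/\ z ^+ (2 * m) = 1, upper z, z != 1 &
   forall x, x ^+ (2 * m) = 1 -> upper x -> x != 1 -> 'Re x <= 'Re z].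
Proof.
move=> hm; have hN : (0 < 2 * m)%N by rewrite muln_gt0.
have [w pw] := C_prim_root_exists hN.
pose P (k : 'I_(2 * m)) := upper (w ^+ k) && (w ^+ k != 1).
have N1_root : (-1 : algC) ^+ (2 * m) = 1 by rewrite exprM sqrrN !expr1n.
have [k0 ek0] := prim_rootP pw N1_root.
have Pk0 : P k0 by rewrite /P -ek0 upperN1 N1_neq1.
case: (arg_maxP (fun k : 'I_(2 * m) => reR (w ^+ k)) Pk0) => k /andP[uk nk] kmax.
exists (w ^+ k); split => //.
- by rewrite exprAC (prim_expr_order pw) expr1n.
- move=> x hx ux nx; have [j ej] := prim_rootP pw hx.
  by rewrite ej; apply: kmax; rewrite /P -ej ux nx.
Qed.

Section MaximalRoot.
Variables (m : nat) (z : algC).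
Hypotheses (hm : (0 < m)%N) (z_root : z ^+ (2 * m) = 1) (z_upper : upper z)
  (z_neq1 : z != 1)
  (z_max : forall x, x ^+ (2 * m) = 1 -> upper x -> x != 1 -> 'Re x <= 'Re z).

Let hN : (0 < 2 * m)%N. Proof. by rewrite muln_gt0. Qed.

Let zX_root k : (z ^+ k) ^+ (2 * m) = 1.
Proof. by rewrite exprAC z_root expr1n. Qed.

(* Maximality of z, applied to - u^*, gives 'Re u + 'Re z >= 0. *)
Lemma Re_add_max_ge0 u : upper u -> u ^+ (2 * m) = 1 -> u != -1 ->
  0 <= 'Re u + 'Re z.
Proof.
move=> uu hu nu; case: (boolP (0 <= 'Re u + 'Re z)) => // hn.
have hx : (- u^*) ^+ (2 * m) = 1.
  by rewrite -mulN1r exprMn exprM sqrrN !expr1n mul1r -rmorphXn hu rmorph1.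
have ux : upper (- u^*).
  by move: uu; rewrite /upper normrN norm_conjC raddfN /= Im_conj opprK.
have nx : - u^* != 1.
  apply: contra nu => /eqP h.
  by rewrite -[u]conjCK -[u^*]opprK h rmorphN rmorph1.
have := z_max _ hx ux nx.
by rewrite raddfN /= Re_conj -subr_ge0 opprK addrC => h; rewrite h in hn.
Qed.

Lemma upper_pow_before_N1 k : (forall i, (i < k)%N -> z ^+ i != -1) ->
  upper (z ^+ k).
Proof.
elim: k => [_|k IH h]; first by rewrite expr0 upper1.
have uk : upper (z ^+ k) by apply: IH => i hi; apply: h; exact: leqW.
by rewrite exprSr; apply: upperM => //; apply: Re_add_max_ge0 => //; apply: h.
Qed.

Lemma Re_pow_antitone_before_N1 k : (forall i, (i <= k)%N -> z ^+ i != -1) ->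
  'Re (z ^+ k.+1) <= 'Re (z ^+ k).
Proof.
move=> h; have uk : upper (z ^+ k).
  by apply: upper_pow_before_N1 => i hi; apply: h; exact: ltnW.
by rewrite exprSr; apply: Re_upperM_le => //; apply: Re_add_max_ge0 => //; apply: h.
Qed.

Lemma z_norm : `|z| = 1.
Proof. exact: unity_norm hN z_root. Qed.

Lemma z_neq0 : z != 0.
Proof. by rewrite -normr_eq0 z_norm oner_eq0. Qed.

Lemma Re_z_lt1 : 'Re z < 1.
Proof.
have : 'Re z <= 1.
  rewrite -z_norm; apply: le_trans (real_ler_norm (Creal_Re z)) _.
  exact: (leif_normC_Re_Creal z).1.
rewrite le_eqVlt => /orP[/eqP e|//].
case/negP: z_neq1; apply/eqP; apply: upper_Re_inj => //; first exact: upper1.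
by rewrite e; apply/esym/Creal_ReP; apply: rpred1.
Qed.

(* Every point of the upper half-circle of order dividing 2m is a power of z:
   otherwise dividing it repeatedly by z would increase its real part forever. *)
Lemma upper_root_is_pow {w : algC} : w ^+ (2 * m) = 1 -> upper w -> exists j, w = z ^+ j.
Proof.
move=> hw uw.
have [/existsP[j /eqP ->]|/existsPn w_not_pow] :=
  boolP [exists j : 'I_(2 * m), w == z ^+ j]; first by exists j.
have hne j : w != z ^+ j.
  by rewrite -(expr_mod j z_root); apply: (w_not_pow (Ordinal (ltn_pmod j hN))).
pose xi j := w / z ^+ j.
have zj0 j : z ^+ j != 0 by rewrite expf_neq0 // z_neq0.
have xiS j : xi j.+1 = xi j * z^*.
  by rewrite /xi exprSr invfM mulrA -unit_inv_conj // z_norm.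
have xi_root j : xi j ^+ (2 * m) = 1 by rewrite /xi expr_div_n hw zX_root divr1.
have step j : upper (xi j) -> upper (xi j.+1) /\ 'Re (xi j) < 'Re (xi j.+1).
  move=> uj.
  have xi_neq1 : xi j != 1.
    by apply: contraNneq (hne j) => e; rewrite -[w](divfK (zj0 j)) -/(xi j) e mul1r.
  have xi_neqz : xi j != z.
    by apply: contraNneq (hne j.+1) => e; rewrite -[w](divfK (zj0 j)) -/(xi j) e -exprS.
  have lt_Re_z : 'Re (xi j) < 'Re z.
    rewrite lt_neqAle z_max // andbT; apply: contra xi_neqz => /eqP e.
    by apply/eqP; apply: upper_Re_inj.
  rewrite xiS; split; first by apply: upper_mul_conj => //; exact: ltW.
  exact: Re_mul_conj_gt Re_z_lt1.
have xi_upper j : upper (xi j).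
  by elim: j => [|j /step[] //]; rewrite /xi expr0 divr1.
have increasing j : 'Re (xi 0) < 'Re (xi j.+1).
  elim: j => [|j IH]; first exact: (step 0 (xi_upper 0)).2.
  exact: lt_trans IH (step _ (xi_upper _)).2.
by have := increasing (2 * m).-1; rewrite prednK // /xi z_root expr0 divr1 ltxx.
Qed.

(* Applying upper_root_is_pow to a primitive 2m-th root w or to w^* shows
   that z itself is primitive. *)
Lemma max_root_prim : (2 * m).-primitive_root z.
Proof.
have [k pk kd] := prim_order_exists hN z_root.
have [w pw] := C_prim_root_exists hN.
have hw := prim_expr_order pw.
suff wk : w ^+ k = 1.
  have /eqP e : k == (2 * m)%N by rewrite eqn_dvd kd (prim_order_dvd pw) wk eqxx.
  by rewrite -e.
have pow_k j : (z ^+ j) ^+ k = 1 by rewrite exprAC (prim_expr_order pk) expr1n.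
have [Iw_ge0|Iw_lt0] := boolP (0 <= 'Im w).
- have uw : upper w by rewrite /upper (unity_norm hN hw) eqxx Iw_ge0.
  by have [j ->] := upper_root_is_pow hw uw.
- have uw : upper w^*.
    rewrite /upper norm_conjC (unity_norm hN hw) eqxx /= Im_conj oppr_ge0.
    by apply: ltW; rewrite real_ltNge ?rpred0 ?Creal_Im.
  have hw' : w^* ^+ (2 * m) = 1 by rewrite -rmorphXn hw rmorph1.
  have [j ej] := upper_root_is_pow hw' uw.
  by rewrite -[w]conjCK ej -rmorphXn pow_k rmorph1.
Qed.

(* z ^+ m is the unique square root of 1 of order 2, namely -1. *)
Lemma max_root_half : z ^+ m = -1.
Proof.
have : (z ^+ m) ^+ 2 = 1 by rewrite -exprM mulnC z_root.
move/eqP; rewrite sqrf_eq1 => /orP[/eqP h|/eqP //].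
have := prim_order_dvd max_root_prim m; rewrite h eqxx => /(dvdn_leq hm).
by rewrite -{2}[m]mul1n leq_pmul2r // ltnn.
Qed.

(* By primitivity, no smaller power of z equals -1. *)
Lemma max_root_pow_neqN1 i : (i < m)%N -> z ^+ i != -1.
Proof.
move=> hi; apply/eqP => e.
case: i hi e => [|i] hi e; first by move: N1_neq1; rewrite -e expr0 eqxx.
have h2 : z ^+ (i.+1 * 2) = 1 by rewrite exprM e sqrrN expr1n.
have := prim_order_dvd max_root_prim (i.+1 * 2); rewrite h2 eqxx => /dvdn_leq.
by move=> /(_ isT); lia.
Qed.

Lemma max_root_pow_upper i : (i <= m)%N -> upper (z ^+ i).
Proof.
move=> hi; apply: upper_pow_before_N1 => j hj; apply: max_root_pow_neqN1; lia.
Qed.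

Lemma max_root_Re_antitone i : (i < m)%N -> 'Re (z ^+ i.+1) <= 'Re (z ^+ i).
Proof.
move=> hi; apply: Re_pow_antitone_before_N1 => j hj; apply: max_root_pow_neqN1; lia.
Qed.

End MaximalRoot.

Definition rt (m : nat) : algC := m.-root (-1).

Lemma rt_root {m : nat} : (0 < m)%N -> rt m ^+ m = -1.
Proof. by move=> hm; rewrite /rt rootCK. Qed.

Lemma rt_root2 {m : nat} : (0 < m)%N -> rt m ^+ (2 * m) = 1.
Proof. by move=> hm; rewrite mulnC exprM rt_root // sqrrN expr1n. Qed.

Lemma rt_upper {m : nat} : (0 < m)%N -> upper (rt m).
Proof.
move=> hm; rewrite /upper (unity_norm _ (rt_root2 hm)) ?muln_gt0 // eqxx /=.
case: m hm => [|[|m]] // _; last exact: Im_rootC_ge0.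
by rewrite /rt root1C (elimT (Creal_ImP (-1)) (rpredN1 _)).
Qed.

Lemma rt_neq1 {m : nat} : (0 < m)%N -> rt m != 1.
Proof.
by move=> hm; apply: contraNneq N1_neq1 => e; rewrite -(rt_root hm) e expr1n.
Qed.

Lemma rt_maximal {m : nat} : (0 < m)%N ->
  forall x, x ^+ (2 * m) = 1 -> upper x -> x != 1 -> 'Re x <= 'Re (rt m).
Proof.
move=> hm; have [z [z_root z_upper z_neq1 z_max]] := max_upper_root hm.
have z_half : z ^+ m = -1 by exact: max_root_half.
suff -> : rt m = z by exact: z_max.
apply: upper_Re_inj (rt_upper hm) (z_upper) _; apply: le_anti.
rewrite z_max ?rt_root2 ?rt_upper ?rt_neq1 //= /rt.
by apply: rootC_Re_max z_half _; case/andP: z_upper.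
Qed.

Lemma rt_prim {m : nat} : (0 < m)%N -> (2 * m).-primitive_root (rt m).
Proof.
move=> hm.
exact: max_root_prim hm (rt_root2 hm) (rt_upper hm) (rt_neq1 hm) (rt_maximal hm).
Qed.

Lemma rt_pow_upper {m : nat} i : (0 < m)%N -> (i <= m)%N -> upper (rt m ^+ i).
Proof.
move=> hm.
exact: max_root_pow_upper hm (rt_root2 hm) (rt_upper hm) (rt_neq1 hm)
  (rt_maximal hm) i.
Qed.

Lemma rt_Re_antitone m i j : (0 < m)%N -> (i <= j)%N -> (j <= m)%N ->
  'Re (rt m ^+ j) <= 'Re (rt m ^+ i).
Proof.
move=> hm /subnKC <-; elim: (j - i)%N => [|k IH] hk; first by rewrite addn0.
rewrite addnS in hk *; apply: le_trans (IH (ltnW hk)).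
exact: max_root_Re_antitone hm (rt_root2 hm) (rt_upper hm) (rt_neq1 hm)
  (rt_maximal hm) _ hk.
Qed.

(* For a primitive 2q-th root b, b ^+ i is the conjugate of b ^+ (2q - i). *)
Lemma Re_prim_root_sym {q : nat} {b : algC} {i : nat} : (2 * q).-primitive_root b ->
  (i <= 2 * q)%N -> 'Re (b ^+ i) = 'Re (b ^+ (2 * q - i)).
Proof.
move=> pb hi; have hq : (0 < 2 * q)%N := prim_order_gt0 pb.
have b_root := prim_expr_order pb.
have nb : `|b ^+ (2 * q - i)| = 1.
  by apply: (unity_norm hq); rewrite exprAC b_root expr1n.
suff -> : b ^+ i = (b ^+ (2 * q - i))^* by rewrite Re_conj.
have nz : b ^+ (2 * q - i) != 0 by rewrite -normr_eq0 nb oner_eq0.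
rewrite -unit_inv_conj //; apply: (mulIf nz).
by rewrite mulVf // -exprD subnKC.
Qed.

Lemma rt_pow d q : (0 < d)%N -> (0 < q)%N -> rt (d * q) ^+ d = rt q.
Proof.
move=> hd hq; have hdq : (0 < d * q)%N by rewrite muln_gt0 hd.
set b := rt (d * q) ^+ d.
have b_prim : (2 * q).-primitive_root b.
  have := dvdn_prim_root (rt_prim hdq) (m := (2 * q)%N).
  by rewrite mulnCA mulnK ?muln_gt0 //; apply; rewrite dvdn_mull.
have b_upper : upper b by apply: rt_pow_upper; rewrite ?leq_pmulr.
have Re_bX j : (0 < j)%N -> (j <= q)%N -> 'Re (b ^+ j) <= 'Re b.
  move=> j0 jq; rewrite /b -exprM.
  by apply: rt_Re_antitone hdq _ _; rewrite ?leq_pmulr ?leq_pmul2l.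
apply: upper_Re_inj (b_upper) (rt_upper hq) _; apply: le_anti; apply/andP; split.
  (* b is an upper q-th root of -1, so the library root dominates it. *)
  apply: rootC_Re_max hq _ _; first by rewrite -exprM rt_root.
  by case/andP: b_upper.
(* Conversely rt q = b ^+ i with 0 < i < 2q; by conjugation symmetry the real
   part is that of b ^+ j for some 0 < j <= q, hence at most 'Re b. *)
have [i ei] := prim_rootP b_prim (rt_root2 hq); rewrite ei.
have i0 : (0 < i)%N.
  rewrite lt0n; apply: contraNneq (N1_neq1) => i0.
  by rewrite -(rt_root hq) ei i0 expr0 expr1n.
have [iq|qi] := leqP i q; first exact: Re_bX.
rewrite (Re_prim_root_sym b_prim (ltnW (ltn_ord i))).
by apply: Re_bX; move: (ltn_ord i) qi; clear; lia.
Qed.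

Lemma zeta_order {m : nat} : (0 < m)%N -> zeta m ^+ m = 1.
Proof. by move=> hm; rewrite /zeta exprAC rootCK // sqrrN expr1n. Qed.

Lemma zeta_pow d q : (0 < d)%N -> (0 < q)%N -> zeta (d * q) ^+ d = zeta q.
Proof. by move=> hd hq; rewrite /zeta -!/(rt _) exprAC rt_pow. Qed.

Definition periodic {T : Type} (G : nat -> T) (A : nat) :=
  forall k, G (k + A)%N = G k.

Section Periodic.
Variables (T : Type) (G : nat -> T) (A : nat).
Hypothesis G_per : periodic G A.

Lemma periodic_mul c k : G (k + c * A)%N = G k.
Proof.
elim: c k => [|c IH] k; first by rewrite mul0n addn0.
by rewrite mulSn addnCA addnC G_per IH.
Qed.

Lemma periodic_mod k : G k = G (k %% A)%N.
Proof. by rewrite {1}(divn_eq k A) addnC periodic_mul. Qed.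

Lemma periodic_dvd B : (A %| B)%N -> periodic G B.
Proof. by move=> /dvdnP[c ->] k; rewrite periodic_mul. Qed.
End Periodic.
Arguments periodic_mod {T G A}.
Arguments periodic_dvd {T G A}.

Lemma coprime_prod_seq (I : eqType) (s : seq I) (F : I -> nat) a :
  (forall p, p \in s -> coprime a (F p)) -> coprime a (\prod_(p <- s) F p).
Proof.
move=> h; rewrite big_seq; apply: (big_ind (coprime a)) => [|x y|//].
  exact: coprimen1.
by rewrite coprimeMr => -> ->.
Qed.

Section CRTSums.
Variable R : comPzSemiRingType.

(* Chinese remainder theorem for sums: k mod AB <-> (k mod A, k mod B). *)
Lemma sum_crt2 A B (G H : nat -> R) : coprime A B -> (0 < A)%N -> (0 < B)%N ->
  periodic G A -> periodic H B ->
  \sum_(k < A * B) G k * H k = (\sum_(a < A) G a) * (\sum_(b < B) H b).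
Proof.
move=> cAB hA hB hG hH.
rewrite big_distrlr /= pair_bigA /=.
pose h (k : 'I_(A * B)) : 'I_A * 'I_B :=
  (Ordinal (ltn_pmod k hA), Ordinal (ltn_pmod k hB)).
have h_inj : injective h.
  move=> k k' [e1 e2]; apply: val_inj => /=.
  have : k == k' %[mod A * B] by rewrite chinese_remainder // e1 e2 !eqxx.
  by rewrite !modn_small ?ltn_ord // => /eqP.
have h_bij : bijective h by apply: inj_card_bij => //; rewrite card_prod !card_ord.
rewrite (reindex h) /=; last exact: onW_bij.
by apply: eq_bigr => k _; rewrite -(periodic_mod hG) -(periodic_mod hH).
Qed.

Lemma sum_crt (I : eqType) (s : seq I) (L : I -> nat) (G : I -> nat -> R) :
  uniq s -> (forall p, p \in s -> 0 < L p)%N ->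
  {in s &, forall p p', p != p' -> coprime (L p) (L p')} ->
  {in s, forall p, periodic (G p) (L p)} ->
  \sum_(k < \prod_(p <- s) L p) \prod_(p <- s) G p k =
  \prod_(p <- s) \sum_(k < L p) G p k.
Proof.
elim: s => [|a s IH] /= s_uniq L_gt0 L_cop G_per.
  by rewrite !big_nil big_ord1 big_nil.
case/andP: s_uniq => a_notin s_uniq.
have in_s p : p \in s -> p \in a :: s by move=> hp; rewrite inE hp orbT.
rewrite big_cons; under eq_bigr do rewrite big_cons; rewrite [RHS]big_cons.
rewrite (@sum_crt2 _ _ (G a) (fun k => \prod_(j <- s) G j k))
  ?L_gt0 ?mem_head ?G_per //.
- rewrite IH // => [p hp|p p' hp hp'|p hp].
  + by apply: L_gt0; apply: in_s.
  + exact: L_cop _ _ (in_s _ hp) (in_s _ hp').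
  + by apply: G_per; apply: in_s.
- apply: coprime_prod_seq => p hp; apply: L_cop; rewrite ?mem_head ?in_s //.
  by apply: contraNneq a_notin => ->.
- by rewrite big_seq prodn_cond_gt0 // => p hp; apply: L_gt0; apply: in_s.
- by apply: G_per; apply: mem_head.
- move=> k; apply: eq_big_seq => p hp; apply: periodic_dvd.
    by apply: G_per; apply: in_s.
  by rewrite (big_rem p) //= dvdn_mulr.
Qed.
End CRTSums.

Lemma Zp_nat_eq_mod q a b : (1 < q)%N -> (a%:R : 'Z_q) = b%:R -> a = b %[mod q].
Proof. by move=> hq /(congr1 val); rewrite /= !val_Zp_nat. Qed.

Lemma Zp_nat_dvd0 q k : (1 < q)%N -> (q %| k)%N -> (k%:R : 'Z_q) = 0.
Proof. by move=> hq /eqP hk; rewrite -Zp_nat_mod // hk. Qed.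

Section Reduction.
Variables (n q : nat).
Hypotheses (hn : (1 < n)%N) (hq : (1 < q)%N) (hqn : (q %| n)%N).

Lemma psi_nat k : psi q (k%:R : 'Z_n) = k%:R.
Proof.
rewrite /psi val_Zp_nat // -(Zp_nat_mod hq (k %% n)) modn_dvdm //.
by rewrite Zp_nat_mod.
Qed.

Lemma psiM (a b : 'Z_n) : psi q (a * b) = psi q a * psi q b.
Proof. by rewrite -{1}[a]natr_Zp -{1}[b]natr_Zp -natrM psi_nat natrM. Qed.

Lemma psi1 : psi q (1 : 'Z_n) = 1.
Proof. by have := psi_nat 1; rewrite !mulr1n. Qed.

Lemma psiX (a : 'Z_n) k : psi q (a ^+ k) = psi q a ^+ k.
Proof. by elim: k => [|k IH]; rewrite ?expr0 ?psi1 // !exprS psiM IH. Qed.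

Lemma psi_unit (a : 'Z_n) : a \is a GRing.unit -> psi q a \is a GRing.unit.
Proof.
by move=> ua; apply/unitrPr; exists (psi q a^-1); rewrite -psiM mulrV // psi1.
Qed.
End Reduction.

(* The CRT coordinates: crt_coef n p = (n / n_p)^{-1} mod n_p and
   crt_proj n p x = crt_coef n p * psi x, so that x = sum_p (n/n_p) crt_proj x. *)
Definition crt_coef n p : 'Z_(n`_p) := ((n %/ n`_p)%:R)^-1.
Definition crt_proj n p (x : 'Z_n) : 'Z_(n`_p) := crt_coef n p * psi (n`_p) x.

Section PrimaryParts.
Variables (n p : nat).
Hypotheses (hn : (1 < n)%N) (hp : p \in primes n).

Lemma part_gt1 : (1 < n`_p)%N.
Proof. by rewrite p_part_gt1. Qed.

(* n_p and n / n_p are coprime, so crt_coef is a genuine inverse. *)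
Lemma cofactor_coprime : coprime (n`_p) (n %/ n`_p).
Proof.
have -> : (n %/ n`_p = n`_p^')%N.
  by rewrite -{1}(partnC p (ltnW hn)) mulKn // part_gt0.
exact: coprime_partC.
Qed.

Lemma crt_coef_unit : crt_coef n p \is a GRing.unit.
Proof. by rewrite unitrV unitZpE ?part_gt1 // cofactor_coprime. Qed.

Lemma part_dvd_cofactor p' : p' \in primes n -> p' != p -> (n`_p' %| n %/ n`_p)%N.
Proof.
move=> hp' ne; have cop : coprime (n`_p') (n`_p).
  rewrite !p_part; apply/coprimeXl/coprimeXr.
  move: hp' hp; rewrite !mem_primes => /and3P[pr' _ _] /and3P[pr _ _].
  by rewrite prime_coprime // dvdn_prime2 // ne.
by rewrite -(Gauss_dvdl _ cop) divnK ?dvdn_part.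
Qed.

Lemma zeta_part : zeta (n`_p) = zeta n ^+ (n %/ n`_p).
Proof.
have hd : (0 < n %/ n`_p)%N.
  by rewrite divn_gt0 ?part_gt0 // dvdn_leq ?dvdn_part //; apply: ltnW.
by rewrite -(zeta_pow _ _ hd (part_gt0 _ _)) divnK // dvdn_part.
Qed.
End PrimaryParts.
Arguments part_gt1 {n p}.
Arguments crt_coef_unit {n p}.
Arguments part_dvd_cofactor {n p}.
Arguments zeta_part {n p}.

(* e(xy/n) = prod_p e(crt_proj x * psi y / n_p), from x = sum_p (n/n_p) crt_proj x. *)
Lemma e_frac_crt n (x y : 'Z_n) : (1 < n)%N ->
  e_frac n (x * y)%N =
  \prod_(p <- primes n) e_frac (n`_p) (crt_proj n p x * psi (n`_p) y)%N.
Proof.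
move=> hn; have hn0 : (0 < n)%N by apply: ltnW.
rewrite /e_frac.
under eq_big_seq => p hp do rewrite (zeta_part hn) -exprM.
rewrite prodrXr -(expr_mod _ (zeta_order hn0)).
rewrite -[in RHS](expr_mod _ (zeta_order hn0)); congr (_ ^+ _).
apply/esym/eqP/modn_partP => // p0 hp0.
apply: Zp_nat_eq_mod; first exact: part_gt1.
rewrite natr_sum (bigD1_seq p0) ?primes_uniq // big1_seq ?addr0.
  rewrite !natrM !natr_Zp /crt_proj /crt_coef mulrA mulrA mulrV ?mul1r.
    by rewrite /= addr0.
  by rewrite -unitrV; apply: crt_coef_unit.
move=> p /andP[ne hp]; rewrite natrM Zp_nat_dvd0 ?mul0r ?part_gt1 //.
by apply: part_dvd_cofactor => //; rewrite eq_sym.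
Qed.

Lemma Zp_val_lt n (a : 'Z_n) : (1 < n)%N -> (a < n)%N.
Proof. by move=> hn; rewrite -[X in (_ < X)%N](Zp_cast hn) ltn_ord. Qed.

Lemma crt_proj_inj n (a b : 'Z_n) : (1 < n)%N ->
  (forall p, p \in primes n -> crt_proj n p a = crt_proj n p b) -> a = b.
Proof.
move=> hn h; apply: val_inj => /=.
have /eqP : (a : nat) == b %[mod n].
  apply/modn_partP => [|p hp]; first exact: ltnW.
  apply: Zp_nat_eq_mod; first exact: part_gt1.
  by have := h p hp; apply: mulrI; apply: crt_coef_unit.
by rewrite !modn_small ?Zp_val_lt.
Qed.

Section Orbit.
Variables (m : nat) (x r : 'Z_m).
Hypothesis x_unit : x \is a GRing.unit.

Lemma unit_cycleE : exists2 u : {unit 'Z_m}, val u = x & unit_cycle x = <[u]>%g.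
Proof.
rewrite /unit_cycle; case: insubP => [u _ eu|]; first by exists u.
by rewrite x_unit.
Qed.

Lemma orbit_period : exists2 L, (0 < L)%N &
  forall k k', (x ^+ k * r == x ^+ k' * r) = (k == k' %[mod L]).
Proof.
have [u eu _] := unit_cycleE.
pose f k := x ^+ k * r.
have fD k j : f (k + j)%N = x ^+ k * f j by rewrite /f exprD mulrA.
have ex : exists d, (0 < d)%N && (f d == r).
  exists #[u]%g; rewrite order_gt0 /f -eu -FinRing.val_unitX expg_order mul1r.
  by rewrite eqxx.
case: (ex_minnP ex) => L /andP[L0 /eqP fL] Lmin.
have f_mulL j : f (j * L)%N = r.
  by elim: j => [|j IH]; rewrite ?mulSn ?fD ?IH // mul0n /f expr0 mul1r.
have fmod k : f k = f (k %% L)%N by rewrite {1}(divn_eq k L) addnC fD f_mulL.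
have f_inj i j : (i <= j)%N -> (j < L)%N -> f i = f j -> i = j.
  move=> hij hj e; apply/eqP; rewrite eqn_leq hij /= leqNgt; apply/negP => lt_ij.
  have f_ji : f (j - i)%N = r.
    by apply: (mulrI (unitrX i x_unit)); rewrite -fD subnKC ?(ltnW lt_ij) // -e.
  have := Lmin (j - i)%N; rewrite subn_gt0 lt_ij f_ji eqxx => /(_ isT).
  lia.
exists L => // k k'; rewrite -/(f k) -/(f k') (fmod k) (fmod k').
apply/eqP/eqP => [|->] // e.
have [hkk'|hk'k] := leqP (k %% L) (k' %% L); first by apply: f_inj; rewrite ?ltn_pmod.
by apply/esym/f_inj; rewrite ?ltn_pmod ?(ltnW hk'k).
Qed.

Lemma orbit_param : exists2 L, (0 < L)%N &
  [/\ forall k k', (x ^+ k * r == x ^+ k' * r) = (k == k' %[mod L]),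
      orbitX x r = [set x ^+ (k : nat) * r | k : 'I_L] &
      injective (fun k : 'I_L => x ^+ (k : nat) * r)].
Proof.
have [u eu ec] := unit_cycleE; have [L L0 per] := orbit_period.
exists L => //; split => // [|i j /eqP]; last first.
  by rewrite per !modn_small // => /eqP/val_inj.
rewrite /orbitX ec; apply/setP => y; apply/imsetP/imsetP => [[a]|[k _ ->]].
  case/cycleP=> i -> ->; exists (Ordinal (ltn_pmod i L0)) => //=.
  by apply/eqP; rewrite FinRing.val_unitX eu per modn_mod.
by exists (u ^+ k)%g; rewrite ?mem_cycle // FinRing.val_unitX eu.
Qed.

Lemma orbitX_period k k' :
  (x ^+ k * r == x ^+ k' * r) = (k == k' %[mod #|orbitX x r|]).
Proof.
have [L L0 [per eX inj]] := orbit_param.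
by rewrite eX card_imset // card_ord per.
Qed.

Lemma orbitX_card_gt0 : (0 < #|orbitX x r|)%N.
Proof.
by have [L L0 [_ eX inj]] := orbit_param; rewrite eX card_imset // card_ord.
Qed.

Lemma orbitX_periodic (T : Type) (g : 'Z_m -> T) :
  periodic (fun k => g (x ^+ k * r)) #|orbitX x r|.
Proof. by move=> k; congr g; apply/eqP; rewrite orbitX_period modnDr. Qed.

Lemma orbitX_sum (R : nmodType) (g : 'Z_m -> R) :
  \sum_(y in orbitX x r) g y = \sum_(k < #|orbitX x r|) g (x ^+ k * r).
Proof.
have [L L0 [per eX inj]] := orbit_param.
by rewrite eX big_imset ?card_imset ?card_ord //; apply: in2W.
Qed.
End Orbit.
Arguments orbitX_period {m x} r.
Arguments orbitX_card_gt0 {m x} r.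
Arguments orbitX_periodic {m x} r.
Arguments orbitX_sum {m x} r.

Lemma coprime_prod_dvd (I : eqType) (s : seq I) (L : I -> nat) k : uniq s ->
  {in s &, forall p p', p != p' -> coprime (L p) (L p')} ->
  (\prod_(p <- s) L p %| k)%N = all (fun p => L p %| k)%N s.
Proof.
elim: s => [|a s IH] /=; first by rewrite big_nil dvd1n.
case/andP=> a_notin s_uniq L_cop.
have in_s p : p \in s -> p \in a :: s by move=> hp; rewrite inE hp orbT.
rewrite big_cons Gauss_dvd; last first.
  apply: coprime_prod_seq => p hp; apply: L_cop; rewrite ?mem_head ?in_s //.
  by apply: contraNneq a_notin => ->.
rewrite IH // => p p' hp hp'; exact: L_cop (in_s _ hp) (in_s _ hp').
Qed.

Lemma crt_proj_orbit n p (w r : 'Z_n) k : (1 < n)%N -> p \in primes n ->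
  crt_proj n p (w ^+ k * r) = psi (n`_p) w ^+ k * (crt_coef n p * psi (n`_p) r).
Proof.
move=> hn hp; have hq := part_gt1 hp.
by rewrite /crt_proj psiM ?psiX ?dvdn_part // mulrCA.
Qed.

Section OrbitSizes.
Variables (n : nat) (w : {unit 'Z_n}) (r : 'Z_n).
Hypothesis hn : (1 < n)%N.

Lemma psi_w_unit {p : nat} : p \in primes n -> psi (n`_p) (val w) \is a GRing.unit.
Proof. by move=> hp; apply: psi_unit (valP w); rewrite ?part_gt1 ?dvdn_part. Qed.

Lemma orbit_return k : (val w ^+ k * r == r) = all (fun p => #|Xj (val w) r p| %| k)%N (primes n).
Proof.
apply/eqP/allP => [e p hp|h].
  have := orbitX_period (crt_coef n p * psi (n`_p) r) (psi_w_unit hp) k 0.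
  by rewrite -!crt_proj_orbit // e expr0 mul1r eqxx mod0n => /esym.
apply: crt_proj_inj => // p hp; rewrite -[r in RHS]mul1r -(expr0 (val w)).
rewrite !crt_proj_orbit //; apply/eqP; rewrite orbitX_period ?psi_w_unit //.
by rewrite mod0n; apply: h.
Qed.

Lemma orbit_card_prod :
  {in primes n &, forall p1 p2, p1 != p2 ->
     coprime #|Xj (val w) r p1| #|Xj (val w) r p2|} ->
  #|orbitX (val w) r| = (\prod_(p <- primes n) #|Xj (val w) r p|)%N.
Proof.
move=> hcop.
have dvdE k : (#|orbitX (val w) r| %| k)%N =
              (\prod_(p <- primes n) #|Xj (val w) r p| %| k)%N.
  rewrite coprime_prod_dvd ?primes_uniq // -orbit_return.
  by have := orbitX_period r (valP w) k 0; rewrite expr0 mul1r mod0n => ->.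
by apply/eqP; rewrite eqn_dvd dvdE dvdnn -dvdE dvdnn.
Qed.
End OrbitSizes.
Arguments psi_w_unit {n w} hn {p}.
Arguments orbit_card_prod {n w r}.

(* sigma_X(y) = sum_(k < |X|) e(w^k r y / n)
              = sum_(k < prod_p |X_p|) prod_p e(x_p(k) psi_p(y) / n_p)
              = prod_p sum_(k < |X_p|) e(x_p(k) psi_p(y) / n_p) = prod_p sigma_(X_p)(psi_p y),
   with x_p(k) = psi_p(w)^k c_p psi_p(r) the k-th point of X_p. *)
Theorem theorem2p1 (n : nat) (hn : (1 < n)%N) (w : {unit 'Z_n}) (r : 'Z_n) :
  (forall p1 p2 : nat, p1 \in primes n -> p2 \in primes n -> p1 != p2 ->
     coprime #|Xj (val w) r p1| #|Xj (val w) r p2|) ->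
  forall y : 'Z_n,
    sigma (orbitX (val w) r) y =
    \prod_(p <- primes n) sigma (Xj (val w) r p) (psi (n`_p) y).
Proof.
move=> hcop y.
pose term (p : nat) (x : 'Z_(n`_p)) := e_frac (n`_p) (x * psi (n`_p) y)%N.
pose pt (p k : nat) := psi (n`_p) (val w) ^+ k * (crt_coef n p * psi (n`_p) r).
rewrite /sigma (orbitX_sum r (valP w)).
under [in LHS]eq_bigr => k _ do rewrite e_frac_crt //.
under [in RHS]eq_big_seq => p hp do rewrite /Xj (orbitX_sum _ (psi_w_unit hn hp)).
rewrite (orbit_card_prod hn hcop).
rewrite -(@sum_crt _ _ _ (fun p => #|Xj (val w) r p|) (fun p k => term p (pt p k)))
  ?primes_uniq //.
- apply: eq_bigr => k _; apply: eq_big_seq => p hp.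
  by rewrite crt_proj_orbit.
- by move=> p hp; apply: orbitX_card_gt0 (psi_w_unit hn hp).
- move=> p hp.
  exact: (orbitX_periodic (crt_coef n p * psi (n`_p) r) (psi_w_unit hn hp)).
Qed.
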